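(* Let $M^2$ be a strongly regular minimal surface of general type in $\mathbb R^4$ parameterized by canonical parameters $(u,v)$ (semi-canonical with $E=G=|\mu^2-\nu^2|^{-1/2}$). Then $$\gamma_1=\big(|\mu^2-\nu^2|^{1/4}\big)_v,\quad \gamma_2=\big(|\mu^2-\nu^2|^{1/4}\big)_u,\quad \beta_1=-|\mu^2-\nu^2|^{1/4}\Big(\ln\sqrt{\big|\tfrac{\mu+\nu}{\mu-\nu}\big|}\Big)_v,\quad \beta_2=|\mu^2-\nu^2|^{1/4}\Big(\ln\sqrt{\big|\tfrac{\mu+\nu}{\mu-\nu}\big|}\Big)_u,$$ and the invariants $\mu,\nu$ satisfy $$\tfrac14\sqrt{|\mu^2-\nu^2|}\,\Delta\ln|\mu^2-\nu^2|+\nu^2+\mu^2=0,\qquad \tfrac12\sqrt{|\mu^2-\nu^2|}\,\Delta\ln\Big|\frac{\mu+\nu}{\mu-\nu}\Big|+2\nu\mu=0,$$ where $\Delta=\partial_u^2+\partial_v^2$. Equivalently, in terms of $K$ and $\varkappa$: $\tfrac18(K^2-\varkappa^2)^{1/4}\Delta\ln(K^2-\varkappa^2)-K=0$ and $\tfrac14(K^2-\varkappa^2)^{1/4}\Delta\ln\frac{K-\varkappa}{K+\varkappa}+\varkappa=0$.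
   Context: $\mathbb R^4$ carries the standard metric $g=\langle\cdot,\cdot\rangle$ and flat connection $\nabla'$; everything is smooth and local. For a regular surface $M^2: z=z(u,v)$ let $E,F,G$ be the first fundamental form coefficients, $\sigma$ the second fundamental form, $K$ the Gauss curvature, and $\varkappa$ the curvature of the normal connection, $\varkappa=g(R^\perp(x,y)n_2,n_1)$ for a positively oriented orthonormal frame $(x,y,n_1,n_2)$ with $x,y$ tangent. Minimal means $\sigma(x,x)+\sigma(y,y)=0$ for orthonormal tangent $x,y$. A minimal surface is of general type if $K^2-\varkappa^2>0$ and $\varkappa\neq0$ everywhere. The ellipse of curvature at $p$ is $\{\sigma(v,v): v\in T_pM^2,\ |v|=1\}$; a tangent line is canonical if it is collinear with an axis of this ellipse. The geometric frame is a positively oriented orthonormal frame $\{x,y,n_1,n_2\}$ with $x,y$ canonical tangent fields and $n_1,n_2$ normal, satisfying $\nabla'_xx=\gamma_1y+\nu n_1$, $\nabla'_xy=-\gamma_1x+\mu n_2$, $\nabla'_yx=-\gamma_2y+\mu n_2$, $\nabla'_yy=\gamma_2x-\nu n_1$, $\nabla'_xn_1=-\nu x+\beta_1n_2$, $\nabla'_yn_1=\nu y+\beta_2n_2$, $\nabla'_xn_2=-\mu y-\beta_1n_1$, $\nabla'_yn_2=-\mu x-\beta_2n_1$, with $\mu>0$, $\nu\ne0$, $\mu^2\ne\nu^2$; the functions $\nu,\mu,\gamma_1,\gamma_2,\beta_1,\beta_2$ are the invariants of $M^2$ (and $K=-(\mu^2+\nu^2)$, $\varkappa=2\nu\mu$).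 Parameters $(u,v)$ are semi-canonical if the parametric lines are integral curves of the canonical tangents, with $F=0$, $x=z_u/\sqrt E$, $y=z_v/\sqrt G$; then $\gamma_1=-y(\ln\sqrt E)$, $\gamma_2=-x(\ln\sqrt G)$. A minimal surface of general type is strongly regular if $\gamma_1\gamma_2\neq0$ everywhere. *)

From Stdlib Require Import Reals Lra.
Open Scope R_scope.

Record V4 := mkV4 { c0 : R; c1 : R; c2 : R; c3 : R }.

Definition vadd (a b : V4) : V4 :=
  mkV4 (c0 a + c0 b) (c1 a + c1 b) (c2 a + c2 b) (c3 a + c3 b).
Definition vscale (k : R) (a : V4) : V4 :=
  mkV4 (k * c0 a) (k * c1 a) (k * c2 a) (k * c3 a).
Definition dot (a b : V4) : R :=
  c0 a * c0 b + c1 a * c1 b + c2 a * c2 b + c3 a * c3 b.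

Definition det3 (a11 a12 a13 a21 a22 a23 a31 a32 a33 : R) : R :=
  a11 * (a22 * a33 - a23 * a32) - a12 * (a21 * a33 - a23 * a31)
  + a13 * (a21 * a32 - a22 * a31).

Definition det4 (a b c d : V4) : R :=
  c0 a * det3 (c1 b) (c1 c) (c1 d) (c2 b) (c2 c) (c2 d) (c3 b) (c3 c) (c3 d)
  - c0 b * det3 (c1 a) (c1 c) (c1 d) (c2 a) (c2 c) (c2 d) (c3 a) (c3 c) (c3 d)
  + c0 c * det3 (c1 a) (c1 b) (c1 d) (c2 a) (c2 b) (c2 d) (c3 a) (c3 b) (c3 d)
  - c0 d * det3 (c1 a) (c1 b) (c1 c) (c2 a) (c2 b) (c2 c) (c3 a) (c3 b) (c3 c).

Definition pos_orthonormal (x y n1 n2 : V4) : Prop :=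
  dot x x = 1 /\ dot y y = 1 /\ dot n1 n1 = 1 /\ dot n2 n2 = 1 /\
  dot x y = 0 /\ dot x n1 = 0 /\ dot x n2 = 0 /\
  dot y n1 = 0 /\ dot y n2 = 0 /\ dot n1 n2 = 0 /\
  det4 x y n1 n2 > 0.

Definition open2 (U : R -> R -> Prop) : Prop :=
  forall u v, U u v -> exists d, d > 0 /\
    forall u' v', Rabs (u' - u) < d -> Rabs (v' - v) < d -> U u' v'.

Definition cont2 (U : R -> R -> Prop) (f : R -> R -> R) : Prop :=
  forall u v, U u v -> forall eps, eps > 0 -> exists d, d > 0 /\
    forall u' v', Rabs (u' - u) < d -> Rabs (v' - v) < d ->
      Rabs (f u' v' - f u v) < eps.

Definition pdu (f : R -> R -> R) (u v a : R) : Prop :=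
  derivable_pt_lim (fun s => f s v) u a.
Definition pdv (f : R -> R -> R) (u v a : R) : Prop :=
  derivable_pt_lim (fun t => f u t) v a.

Fixpoint Ck (k : nat) (U : R -> R -> Prop) (f : R -> R -> R) : Prop :=
  match k with
  | O => cont2 U f
  | S k' => cont2 U f /\ exists fu fv : R -> R -> R,
      (forall u v, U u v -> pdu f u v (fu u v) /\ pdv f u v (fv u v)) /\
      Ck k' U fu /\ Ck k' U fv
  end.

Definition smooth2 (U : R -> R -> Prop) (f : R -> R -> R) : Prop :=
  forall k, Ck k U f.

Definition smoothV (U : R -> R -> Prop) (F : R -> R -> V4) : Prop :=
  smooth2 U (fun u v => c0 (F u v)) /\ smooth2 U (fun u v => c1 (F u v)) /\
  smooth2 U (fun u v => c2 (F u v)) /\ smooth2 U (fun u v => c3 (F u v)).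

Definition pduV (F : R -> R -> V4) (u v : R) (A : V4) : Prop :=
  pdu (fun s t => c0 (F s t)) u v (c0 A) /\ pdu (fun s t => c1 (F s t)) u v (c1 A) /\
  pdu (fun s t => c2 (F s t)) u v (c2 A) /\ pdu (fun s t => c3 (F s t)) u v (c3 A).
Definition pdvV (F : R -> R -> V4) (u v : R) (A : V4) : Prop :=
  pdv (fun s t => c0 (F s t)) u v (c0 A) /\ pdv (fun s t => c1 (F s t)) u v (c1 A) /\
  pdv (fun s t => c2 (F s t)) u v (c2 A) /\ pdv (fun s t => c3 (F s t)) u v (c3 A).

Definition is_laplacian (U : R -> R -> Prop) (f L : R -> R -> R) : Prop :=
  exists fu fv fuu fvv : R -> R -> R,
    forall u v, U u v ->
      pdu f u v (fu u v) /\ pdv f u v (fv u v) /\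
      pdu fu u v (fuu u v) /\ pdv fv u v (fvv u v) /\
      L u v = fuu u v + fvv u v.

(* In canonical parameters E = G = f^(-2), so the frame formulas say that
   every frame vector X has partials X_u = sqrt E (...), X_v = sqrt E (...).
   The whole proof consists in writing out the integrability conditions
   X_uv = X_vu (Schwarz's theorem) and reading off their frame components:
   - z gives (sqrt E)_u = -E gamma2, (sqrt E)_v = -E gamma1, hence f_u = gamma2,
     f_v = gamma1;
   - x gives the Gauss equation, n1 the Ricci equation, and n1, n2 together
     the Codazzi equations, which identify beta1, beta2 with derivatives of h;
   - substituting these into Delta ln f and Delta h gives the two equations. *)
From Stdlib Require Import Reals Lra Psatz.
Open Scope R_scope.

(* Differentiation rules for [derivable_pt_lim], stated with the value of the
   derivative written out, so that they compose by plain application. *)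

Lemma Dv_eq f x l l' : derivable_pt_lim f x l -> l = l' -> derivable_pt_lim f x l'.
Proof. intros H <-; exact H. Qed.

Lemma Dv_plus f g x a b : derivable_pt_lim f x a -> derivable_pt_lim g x b ->
  derivable_pt_lim (fun t => f t + g t) x (a + b).
Proof. exact (derivable_pt_lim_plus f g x a b). Qed.

Lemma Dv_minus f g x a b : derivable_pt_lim f x a -> derivable_pt_lim g x b ->
  derivable_pt_lim (fun t => f t - g t) x (a - b).
Proof. exact (derivable_pt_lim_minus f g x a b). Qed.

Lemma Dv_mult f g x a b : derivable_pt_lim f x a -> derivable_pt_lim g x b ->
  derivable_pt_lim (fun t => f t * g t) x (a * g x + f x * b).
Proof. exact (derivable_pt_lim_mult f g x a b). Qed.

Lemma Dv_scal c f x a : derivable_pt_lim f x a ->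
  derivable_pt_lim (fun t => c * f t) x (c * a).
Proof. exact (derivable_pt_lim_scal f c x a). Qed.

Lemma Dv_div f g x a b : derivable_pt_lim f x a -> derivable_pt_lim g x b -> g x <> 0 ->
  derivable_pt_lim (fun t => f t / g t) x ((a * g x - b * f x) / (g x) ^ 2).
Proof.
  intros Hf Hg Hg0. eapply Dv_eq; [exact (derivable_pt_lim_div f g x a b Hf Hg Hg0)|].
  f_equal; unfold Rsqr; ring.
Qed.

Lemma Dv_inv f x a : derivable_pt_lim f x a -> f x <> 0 ->
  derivable_pt_lim (fun t => / f t) x (- a / f x ^ 2).
Proof.
  intros Hf Hf0.
  apply derivable_pt_lim_ext with (f := fun t => 1 / f t); [intro; unfold Rdiv; ring|].
  eapply Dv_eq; [apply (Dv_div (fun _ => 1)); [apply derivable_pt_lim_const | exact Hf | exact Hf0]|].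
  field; exact Hf0.
Qed.

Lemma Dv_ln f x a : derivable_pt_lim f x a -> 0 < f x ->
  derivable_pt_lim (fun t => ln (f t)) x (a / f x).
Proof.
  intros Hf Hpos. eapply Dv_eq.
  - exact (derivable_pt_lim_comp f ln x a _ Hf (derivable_pt_lim_ln _ Hpos)).
  - unfold Rdiv; ring.
Qed.

Lemma Dv_sqrt f x a : derivable_pt_lim f x a -> 0 < f x ->
  derivable_pt_lim (fun t => sqrt (f t)) x (a / (2 * sqrt (f x))).
Proof.
  intros Hf Hpos. eapply Dv_eq.
  - exact (derivable_pt_lim_comp f sqrt x a _ Hf (derivable_pt_lim_sqrt _ Hpos)).
  - unfold Rdiv; ring.
Qed.

Lemma Dv_ln_sqr f x a : derivable_pt_lim f x a -> f x <> 0 ->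
  derivable_pt_lim (fun t => ln (f t ^ 2)) x (2 * a / f x).
Proof.
  intros Hf Hf0. eapply Dv_eq.
  - apply (Dv_ln (fun t => f t ^ 2)); [|rewrite <- Rsqr_pow2; apply Rsqr_pos_lt; exact Hf0].
    apply derivable_pt_lim_ext with (f := fun t => f t * f t); [intro; ring|].
    apply Dv_mult; exact Hf.
  - field; exact Hf0.
Qed.

Lemma pdu_ext U f g u v a : open2 U -> U u v ->
  (forall s t, U s t -> f s t = g s t) -> pdu f u v a -> pdu g u v a.
Proof.
  intros hU Huv Hfg Hf. destruct (hU u v Huv) as [d [Hd HUd]].
  apply (derivable_pt_lim_locally_ext (fun s => f s v) _ u (u - d) (u + d) a); [lra| |exact Hf].
  intros s Hs. apply Hfg, HUd; [apply Rabs_def1|rewrite Rminus_diag, Rabs_R0]; lra.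
Qed.

Lemma pdv_ext U f g u v a : open2 U -> U u v ->
  (forall s t, U s t -> f s t = g s t) -> pdv f u v a -> pdv g u v a.
Proof.
  intros hU Huv Hfg Hf. destruct (hU u v Huv) as [d [Hd HUd]].
  apply (derivable_pt_lim_locally_ext (fun t => f u t) _ v (v - d) (v + d) a); [lra| |exact Hf].
  intros t Ht. apply Hfg, HUd; [rewrite Rminus_diag, Rabs_R0|apply Rabs_def1]; lra.
Qed.

Lemma pdu_opp f u v a : pdu f u v a -> pdu (fun s t => - f s t) u v (- a).
Proof. exact (derivable_pt_lim_opp (fun s => f s v) u a). Qed.

Lemma pdv_opp f u v a : pdv f u v a -> pdv (fun s t => - f s t) u v (- a).
Proof. exact (derivable_pt_lim_opp (fun t => f u t) v a). Qed.

Lemma smooth_partials U f : smooth2 U f -> exists fu fv : R -> R -> R,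
  forall u v, U u v -> pdu f u v (fu u v) /\ pdv f u v (fv u v).
Proof. intros hf. destruct (hf 1%nat) as [_ [fu [fv [Hd _]]]]. exists fu, fv; exact Hd. Qed.

Lemma partials_at U f u v : smooth2 U f -> U u v -> exists fu fv, pdu f u v fu /\ pdv f u v fv.
Proof.
  intros hf Huv. destruct (smooth_partials U f hf) as [fu [fv Hd]].
  exists (fu u v), (fv u v). exact (Hd u v Huv).
Qed.

(* Second differences over a square: if F_u = A and A_v = P on the closed
   square [u, u+h] x [v, v+h], the second difference of F is h^2 P at some
   point of the square (two applications of the mean value theorem). *)
Lemma second_difference F A P u v h : 0 < h ->
  (forall s t, u <= s <= u + h -> v <= t <= v + h ->
     pdu F s t (A s t) /\ pdv A s t (P s t)) ->
  exists s t, u <= s <= u + h /\ v <= t <= v + h /\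
    F (u + h) (v + h) - F (u + h) v - (F u (v + h) - F u v) = h * h * P s t.
Proof.
  intros Hh HD.
  destruct (MVT_cor2 (fun s => F s (v + h) - F s v) (fun s => A s (v + h) - A s v) u (u + h))
    as [s [Hs Hsr]]; [lra| |].
  { intros c Hc. apply Dv_minus; apply HD; lra. }
  destruct (MVT_cor2 (fun t => A s t) (fun t => P s t) v (v + h)) as [t [Ht Htr]]; [lra| |].
  { intros c Hc. apply HD; lra. }
  exists s, t. split; [lra|]. split; [lra|].
  replace (v + h - v) with h in Ht by ring. replace (u + h - u) with h in Hs by ring.
  cbv beta in Hs, Ht. rewrite Hs, Ht. ring.
Qed.

Lemma schwarz U F A B P Q u v : open2 U -> U u v ->
  (forall s t, U s t -> pdu F s t (A s t) /\ pdv F s t (B s t) /\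
     pdv A s t (P s t) /\ pdu B s t (Q s t)) ->
  cont2 U P -> cont2 U Q -> P u v = Q u v.
Proof.
  intros hU Huv HD HP HQ. apply cond_eq. intros eps Heps.
  destruct (hU u v Huv) as [d0 [Hd0 HU0]].
  destruct (HP u v Huv (eps / 2)) as [d1 [Hd1 HP1]]; [lra|].
  destruct (HQ u v Huv (eps / 2)) as [d2 [Hd2 HQ1]]; [lra|].
  set (h := Rmin d0 (Rmin d1 d2) / 2).
  assert (Hh : 0 < h /\ h < d0 /\ h < d1 /\ h < d2).
  { pose proof (Rmin_l d0 (Rmin d1 d2)); pose proof (Rmin_r d0 (Rmin d1 d2)).
    pose proof (Rmin_l d1 d2); pose proof (Rmin_r d1 d2).
    assert (0 < Rmin d0 (Rmin d1 d2)) by (repeat apply Rmin_glb_lt; assumption).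
    unfold h; lra. }
  assert (Hsq : forall s t, u <= s <= u + h -> v <= t <= v + h -> U s t).
  { intros s t Hs Ht. apply HU0; apply Rabs_def1; lra. }
  destruct (second_difference F A P u v h) as [s [t [Hs [Ht HdP]]]]; [lra| |].
  { intros s t Hs Ht. destruct (HD s t (Hsq s t Hs Ht)) as [HA [_ [HPd _]]].
    split; assumption. }
  (* the same second difference, read with the roles of u and v exchanged *)
  destruct (second_difference (fun t s => F s t) (fun t s => B s t) (fun t s => Q s t) v u h)
    as [t' [s' [Ht' [Hs' HdQ]]]]; [lra| |].
  { intros t' s' Ht' Hs'. destruct (HD s' t' (Hsq s' t' Hs' Ht')) as [_ [HB [_ HQd]]].
    split; assumption. }
  assert (Hmid : P s t = Q s' t').
  { apply Rmult_eq_reg_l with (h * h); [|nra]. rewrite <- HdP, <- HdQ. ring. }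
  assert (H1 : Rabs (P s t - P u v) < eps / 2) by (apply HP1; apply Rabs_def1; lra).
  assert (H2 : Rabs (Q s' t' - Q u v) < eps / 2) by (apply HQ1; apply Rabs_def1; lra).
  apply Rabs_def2 in H1. apply Rabs_def2 in H2. apply Rabs_def1; lra.
Qed.

Lemma smooth_mixed_partials U F A B u v P Q : open2 U -> smooth2 U F ->
  (forall s t, U s t -> pdu F s t (A s t) /\ pdv F s t (B s t)) -> U u v ->
  pdv A u v P -> pdu B u v Q -> P = Q.
Proof.
  intros hU hF HAB Huv HP HQ.
  destruct (hF 2%nat) as [_ [Fu [Fv [HFd [[_ [Fuu [Fuv [HFud [_ HFuv]]]]]
                                       [_ [Fvu [Fvv [HFvd [HFvu _]]]]]]]]]].
  assert (EA : forall s t, U s t -> A s t = Fu s t).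
  { intros s t Hst. eapply uniqueness_limite; [apply HAB | apply HFd]; exact Hst. }
  assert (EB : forall s t, U s t -> B s t = Fv s t).
  { intros s t Hst. eapply uniqueness_limite; [apply HAB | apply HFd]; exact Hst. }
  assert (HP' : P = Fuv u v).
  { eapply uniqueness_limite; [exact (pdv_ext U A Fu u v P hU Huv EA HP) | apply HFud, Huv]. }
  assert (HQ' : Q = Fvu u v).
  { eapply uniqueness_limite; [exact (pdu_ext U B Fv u v Q hU Huv EB HQ) | apply HFvd, Huv]. }
  rewrite HP', HQ'. apply (schwarz U F Fu Fv); try assumption.
  intros s t Hst. repeat split; first [apply HFd | apply HFud | apply HFvd]; exact Hst.
Qed.

Lemma smoothV_mixed_partials U X A B u v P Q : open2 U -> smoothV U X ->
  (forall s t, U s t -> pduV X s t (A s t) /\ pdvV X s t (B s t)) -> U u v ->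
  pdvV A u v P -> pduV B u v Q -> P = Q.
Proof.
  intros hU [h0 [h1 [h2 h3]]] HAB Huv [P0 [P1 [P2 P3]]] [Q0 [Q1 [Q2 Q3]]].
  destruct P as [p0 p1 p2 p3], Q as [q0 q1 q2 q3]; simpl in *.
  f_equal;
    [ refine (smooth_mixed_partials U _ _ _ u v _ _ hU h0 _ Huv P0 Q0)
    | refine (smooth_mixed_partials U _ _ _ u v _ _ hU h1 _ Huv P1 Q1)
    | refine (smooth_mixed_partials U _ _ _ u v _ _ hU h2 _ Huv P2 Q2)
    | refine (smooth_mixed_partials U _ _ _ u v _ _ hU h3 _ Huv P3 Q3) ];
    intros s t Hst; destruct (HAB s t Hst) as [HA HB]; split; apply HA || apply HB.
Qed.

Lemma pduV_add X Y u v A B : pduV X u v A -> pduV Y u v B ->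
  pduV (fun s t => vadd (X s t) (Y s t)) u v (vadd A B).
Proof.
  intros [? [? [? ?]]] [? [? [? ?]]]. repeat split; apply Dv_plus; assumption.
Qed.

Lemma pdvV_add X Y u v A B : pdvV X u v A -> pdvV Y u v B ->
  pdvV (fun s t => vadd (X s t) (Y s t)) u v (vadd A B).
Proof.
  intros [? [? [? ?]]] [? [? [? ?]]]. repeat split; apply Dv_plus; assumption.
Qed.

Lemma pduV_scale f X u v a A : pdu f u v a -> pduV X u v A ->
  pduV (fun s t => vscale (f s t) (X s t)) u v (vadd (vscale a (X u v)) (vscale (f u v) A)).
Proof.
  intros Hf [? [? [? ?]]]. repeat split; apply (Dv_mult (fun s => f s v)); assumption.
Qed.

Lemma pdvV_scale f X u v a A : pdv f u v a -> pdvV X u v A ->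
  pdvV (fun s t => vscale (f s t) (X s t)) u v (vadd (vscale a (X u v)) (vscale (f u v) A)).
Proof.
  intros Hf [? [? [? ?]]]. repeat split; apply (Dv_mult (fun t => f u t)); assumption.
Qed.

(* Integrability condition X_uv = X_vu for a smooth vector field whose first
   partials are scaled two-term combinations  X_u = S (a P + b Q)  and
   X_v = S (c R + d W), as is the case for every vector of a moving frame. *)
Lemma frame_field_integrability U X S a b c d P Q R W u v
    sv av bv Pv Qv su cu du Ru Wu :
  open2 U -> smoothV U X -> U u v ->
  (forall s t, U s t ->
     pduV X s t (vscale (S s t) (vadd (vscale (a s t) (P s t)) (vscale (b s t) (Q s t))))) ->
  (forall s t, U s t ->
     pdvV X s t (vscale (S s t) (vadd (vscale (c s t) (R s t)) (vscale (d s t) (W s t))))) ->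
  pdv S u v sv -> pdv a u v av -> pdv b u v bv -> pdvV P u v Pv -> pdvV Q u v Qv ->
  pdu S u v su -> pdu c u v cu -> pdu d u v du -> pduV R u v Ru -> pduV W u v Wu ->
  vadd (vscale sv (vadd (vscale (a u v) (P u v)) (vscale (b u v) (Q u v))))
       (vscale (S u v) (vadd (vadd (vscale av (P u v)) (vscale (a u v) Pv))
                             (vadd (vscale bv (Q u v)) (vscale (b u v) Qv)))) =
  vadd (vscale su (vadd (vscale (c u v) (R u v)) (vscale (d u v) (W u v))))
       (vscale (S u v) (vadd (vadd (vscale cu (R u v)) (vscale (c u v) Ru))
                             (vadd (vscale du (W u v)) (vscale (d u v) Wu)))).
Proof.
  intros hU hX Huv HXu HXv HSv Hav Hbv HPv HQv HSu Hcu Hdu HRu HWu.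
  apply (smoothV_mixed_partials U X _ _ u v _ _ hU hX (fun s t Hst => conj (HXu s t Hst) (HXv s t Hst)) Huv).
  - apply pdvV_scale; [exact HSv|].
    apply pdvV_add; apply pdvV_scale; assumption.
  - apply pduV_scale; [exact HSu|].
    apply pduV_add; apply pduV_scale; assumption.
Qed.

Lemma dot_add_r a b c : dot a (vadd b c) = dot a b + dot a c.
Proof. unfold dot, vadd; simpl; ring. Qed.

Lemma dot_scale_r a k b : dot a (vscale k b) = k * dot a b.
Proof. unfold dot, vscale; simpl; ring. Qed.

Lemma orthonormal_dot_table x y n1 n2 : pos_orthonormal x y n1 n2 ->
  dot x x = 1 /\ dot x y = 0 /\ dot x n1 = 0 /\ dot x n2 = 0 /\
  dot y x = 0 /\ dot y y = 1 /\ dot y n1 = 0 /\ dot y n2 = 0 /\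
  dot n1 x = 0 /\ dot n1 y = 0 /\ dot n1 n1 = 1 /\ dot n1 n2 = 0 /\
  dot n2 x = 0 /\ dot n2 y = 0 /\ dot n2 n1 = 0 /\ dot n2 n2 = 1.
Proof.
  assert (Hsym : forall a b, dot a b = dot b a) by (intros; unfold dot; ring).
  intros (Hxx & Hyy & H11 & H22 & Hxy & Hx1 & Hx2 & Hy1 & Hy2 & H12 & _).
  rewrite !(Hsym y x), !(Hsym n1 x), !(Hsym n2 x), !(Hsym n1 y), !(Hsym n2 y), !(Hsym n2 n1).
  repeat split; assumption.
Qed.

(* Takes the component of a vector identity [H] along a frame vector: expands
   the inner products and evaluates them with the dot-table in context. *)
Ltac expand_dots H :=
  repeat (rewrite dot_add_r in H || rewrite dot_scale_r in H);
  repeat match goal with D : dot ?a ?b = _ |- _ => progress rewrite D in H end.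

Lemma laplacian_ext U F G L : open2 U -> (forall s t, U s t -> F s t = G s t) ->
  is_laplacian U F L -> is_laplacian U G L.
Proof.
  intros hU HFG [Fu [Fv [Fuu [Fvv HL]]]]. exists Fu, Fv, Fuu, Fvv.
  intros u v Huv. destruct (HL u v Huv) as (H1 & H2 & H3 & H4 & H5).
  repeat split; try assumption.
  - exact (pdu_ext U F G u v _ hU Huv HFG H1).
  - exact (pdv_ext U F G u v _ hU Huv HFG H2).
Qed.

Lemma laplacian_scale U F L c : is_laplacian U F L ->
  is_laplacian U (fun s t => c * F s t) (fun s t => c * L s t).
Proof.
  intros [Fu [Fv [Fuu [Fvv HL]]]].
  exists (fun s t => c * Fu s t), (fun s t => c * Fv s t),
    (fun s t => c * Fuu s t), (fun s t => c * Fvv s t).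
  intros u v Huv. destruct (HL u v Huv) as (H1 & H2 & H3 & H4 & H5).
  repeat split; try (apply Dv_scal; assumption). rewrite H5; ring.
Qed.

Lemma laplacian_of_gradient U F f p q fu fv P Q cu cv :
  (forall u v, U u v -> f u v <> 0 /\ pdu f u v (fu u v) /\ pdv f u v (fv u v) /\
     pdu p u v (P u v) /\ pdv q u v (Q u v) /\
     pdu F u v (cu * (p u v / f u v)) /\ pdv F u v (cv * (q u v / f u v))) ->
  is_laplacian U F (fun u v => cu * ((P u v * f u v - fu u v * p u v) / f u v ^ 2)
                             + cv * ((Q u v * f u v - fv u v * q u v) / f u v ^ 2)).
Proof.
  intros H.
  exists (fun u v => cu * (p u v / f u v)), (fun u v => cv * (q u v / f u v)),
    (fun u v => cu * ((P u v * f u v - fu u v * p u v) / f u v ^ 2)),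
    (fun u v => cv * ((Q u v * f u v - fv u v * q u v) / f u v ^ 2)).
  intros u v Huv. destruct (H u v Huv) as (Hf0 & Hfu & Hfv & HP & HQ & HFu & HFv).
  repeat split; try assumption.
  - apply Dv_scal, (Dv_div (fun s => p s v) (fun s => f s v)); assumption.
  - apply Dv_scal, (Dv_div (fun t => q u t) (fun t => f u t)); assumption.
Qed.

Lemma Rpower_pos a y : 0 < Rpower a y.
Proof. apply exp_pos. Qed.

Lemma sqrt_Rpower_inv_half a : 0 < a -> sqrt (Rpower a (- (1/2))) = / Rpower a (1/4).
Proof.
  intros Ha. rewrite <- Rpower_sqrt by apply Rpower_pos.
  rewrite Rpower_mult, <- Rpower_Ropp. f_equal. field.
Qed.

Lemma sqrt_eq_Rpower_quarter_sqr a : 0 < a -> sqrt a = Rpower a (1/4) ^ 2.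
Proof.
  intros Ha. rewrite <- Rpower_sqrt by exact Ha.
  simpl. rewrite Rmult_1_r, <- Rpower_plus. f_equal. field.
Qed.

Lemma Rpower_sqr_quarter a : 0 < a -> Rpower (a ^ 2) (1/4) = sqrt a.
Proof.
  intros Ha. rewrite <- (Rpower_pow 2) by exact Ha.
  rewrite Rpower_mult, <- Rpower_sqrt by exact Ha. f_equal. simpl. field.
Qed.

Lemma ln_abs_half_ln_sqr w : w <> 0 -> ln (Rabs w) = /2 * ln (w ^ 2).
Proof.
  intros Hw. rewrite <- pow2_abs, ln_pow by (apply Rabs_pos_lt; exact Hw). simpl. field.
Qed.

Lemma ln_sqrt_abs_quarter_ln_sqr w : w <> 0 -> ln (sqrt (Rabs w)) = /4 * ln (w ^ 2).
Proof.
  intros Hw. assert (Hpos : 0 < Rabs w) by (apply Rabs_pos_lt; exact Hw).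
  rewrite <- Rpower_sqrt, ln_Rpower by exact Hpos.
  rewrite <- pow2_abs, ln_pow by exact Hpos. simpl. field.
Qed.

Lemma sqr_diff_nonzero a b : a ^ 2 <> b ^ 2 ->
  a ^ 2 - b ^ 2 <> 0 /\ a - b <> 0 /\ a + b <> 0 /\ (a + b) / (a - b) <> 0.
Proof.
  intros Hab.
  assert (Hm : a - b <> 0) by (intro H; apply Hab; replace a with b by lra; reflexivity).
  assert (Hp : a + b <> 0) by (intro H; apply Hab; replace a with (- b) by lra; ring).
  repeat split; [lra | exact Hm | exact Hp |].
  unfold Rdiv. apply Rmult_integral_contrapositive. split; [exact Hp | apply Rinv_neq_0_compat, Hm].
Qed.

Section StructureEquations.

(* A surface z with moving frame (x, y, n1, n2) in isothermal parameters:
   E = G, F = 0, x = z_u / sqrt E, y = z_v / sqrt E, and the frame obeys the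
   derivative formulas of the geometric frame with invariants
   nu, mu, gamma1, gamma2, beta1, beta2. *)
Variables (U : R -> R -> Prop) (z x y n1 n2 : R -> R -> V4)
  (E nu mu gamma1 gamma2 beta1 beta2 : R -> R -> R).
Hypothesis hU : open2 U.
Hypotheses (hsz : smoothV U z) (hsx : smoothV U x) (hsn1 : smoothV U n1) (hsn2 : smoothV U n2).
Hypotheses (hsE : smooth2 U E) (hsnu : smooth2 U nu) (hsmu : smooth2 U mu)
  (hsg1 : smooth2 U gamma1) (hsg2 : smooth2 U gamma2)
  (hsb1 : smooth2 U beta1) (hsb2 : smooth2 U beta2).
Hypothesis hEpos : forall u v, U u v -> 0 < E u v.
Hypothesis hframe : forall u v, U u v -> pos_orthonormal (x u v) (y u v) (n1 u v) (n2 u v).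
Hypothesis hzu : forall u v, U u v -> pduV z u v (vscale (sqrt (E u v)) (x u v)).
Hypothesis hzv : forall u v, U u v -> pdvV z u v (vscale (sqrt (E u v)) (y u v)).
Hypothesis hxx : forall u v, U u v -> pduV x u v
  (vscale (sqrt (E u v)) (vadd (vscale (gamma1 u v) (y u v)) (vscale (nu u v) (n1 u v)))).
Hypothesis hxy : forall u v, U u v -> pduV y u v
  (vscale (sqrt (E u v)) (vadd (vscale (- gamma1 u v) (x u v)) (vscale (mu u v) (n2 u v)))).
Hypothesis hyx : forall u v, U u v -> pdvV x u v
  (vscale (sqrt (E u v)) (vadd (vscale (- gamma2 u v) (y u v)) (vscale (mu u v) (n2 u v)))).
Hypothesis hyy : forall u v, U u v -> pdvV y u v
  (vscale (sqrt (E u v)) (vadd (vscale (gamma2 u v) (x u v)) (vscale (- nu u v) (n1 u v)))).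
Hypothesis hxn1 : forall u v, U u v -> pduV n1 u v
  (vscale (sqrt (E u v)) (vadd (vscale (- nu u v) (x u v)) (vscale (beta1 u v) (n2 u v)))).
Hypothesis hyn1 : forall u v, U u v -> pdvV n1 u v
  (vscale (sqrt (E u v)) (vadd (vscale (nu u v) (y u v)) (vscale (beta2 u v) (n2 u v)))).
Hypothesis hxn2 : forall u v, U u v -> pduV n2 u v
  (vscale (sqrt (E u v)) (vadd (vscale (- mu u v) (y u v)) (vscale (- beta1 u v) (n1 u v)))).
Hypothesis hyn2 : forall u v, U u v -> pdvV n2 u v
  (vscale (sqrt (E u v)) (vadd (vscale (- mu u v) (x u v)) (vscale (- beta2 u v) (n1 u v)))).

(* Integrability of z: the conformal factor sqrt E is governed by the
   geodesic curvatures, (sqrt E)_u = -E gamma2 and (sqrt E)_v = -E gamma1. *)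
Lemma metric_derivatives u v : U u v ->
  pdu (fun s t => sqrt (E s t)) u v (- sqrt (E u v) ^ 2 * gamma2 u v) /\
  pdv (fun s t => sqrt (E s t)) u v (- sqrt (E u v) ^ 2 * gamma1 u v).
Proof.
  intros Huv.
  destruct (smooth_partials U E hsE) as [Eu [Ev HEd]].
  destruct (HEd u v Huv) as [HEu HEv].
  pose proof (Dv_sqrt _ _ _ HEu (hEpos u v Huv)) as Hsu.
  pose proof (Dv_sqrt _ _ _ HEv (hEpos u v Huv)) as Hsv.
  pose proof (smoothV_mixed_partials U z _ _ u v _ _ hU hsz
    (fun s t Hst => conj (hzu s t Hst) (hzv s t Hst)) Huv
    (pdvV_scale _ _ _ _ _ _ Hsv (hyx u v Huv))
    (pduV_scale _ _ _ _ _ _ Hsu (hxy u v Huv))) as Hz.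
  destruct (orthonormal_dot_table _ _ _ _ (hframe u v Huv)) as (?&?&?&?&?&?&?&?&?&?&?&?&?&?&?&?).
  pose proof (f_equal (dot (x u v)) Hz) as Hzx. pose proof (f_equal (dot (y u v)) Hz) as Hzy.
  expand_dots Hzx. expand_dots Hzy.
  split; [eapply Dv_eq; [exact Hsu|] | eapply Dv_eq; [exact Hsv|]]; lra.
Qed.

(* Integrability of n1, in components along x, y and n2: the last one is
   the Ricci equation, the first two feed the Codazzi equations. *)
Lemma n1_integrability u v nu_u nu_v b1v b2u : U u v ->
  pdu nu u v nu_u -> pdv nu u v nu_v -> pdv beta1 u v b1v -> pdu beta2 u v b2u ->
  sqrt (E u v) * mu u v * beta1 u v = 2 * sqrt (E u v) * nu u v * gamma1 u v - nu_v /\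
  sqrt (E u v) * mu u v * beta2 u v = nu_u - 2 * sqrt (E u v) * nu u v * gamma2 u v /\
  b1v - b2u = sqrt (E u v) *
    (gamma1 u v * beta1 u v - gamma2 u v * beta2 u v + 2 * nu u v * mu u v).
Proof.
  intros Huv Hnu Hnv Hb1 Hb2.
  destruct (metric_derivatives u v Huv) as [Hsu Hsv].
  pose proof (frame_field_integrability U n1 _ _ _ _ _ _ _ _ _ u v _ _ _ _ _ _ _ _ _ _
    hU hsn1 Huv hxn1 hyn1 Hsv (pdv_opp _ _ _ _ Hnv) Hb1 (hyx u v Huv) (hyn2 u v Huv)
    Hsu Hnu Hb2 (hxy u v Huv) (hxn2 u v Huv)) as Hn1.
  destruct (orthonormal_dot_table _ _ _ _ (hframe u v Huv)) as (?&?&?&?&?&?&?&?&?&?&?&?&?&?&?&?).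
  pose proof (f_equal (dot (x u v)) Hn1) as Hx. expand_dots Hx.
  pose proof (f_equal (dot (y u v)) Hn1) as Hy. expand_dots Hy.
  pose proof (f_equal (dot (n2 u v)) Hn1) as Hn. expand_dots Hn.
  assert (Hs : 0 < sqrt (E u v)) by exact (sqrt_lt_R0 _ (hEpos u v Huv)).
  repeat split; apply Rmult_eq_reg_l with (sqrt (E u v)); lra.
Qed.
(* Integrability of n2, in components along x and y (Codazzi type). *)
Lemma n2_integrability u v mu_u mu_v : U u v -> pdu mu u v mu_u -> pdv mu u v mu_v ->
  sqrt (E u v) * nu u v * beta2 u v = mu_u - 2 * sqrt (E u v) * mu u v * gamma2 u v /\
  sqrt (E u v) * nu u v * beta1 u v = 2 * sqrt (E u v) * mu u v * gamma1 u v - mu_v.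
Proof.
  intros Huv Hmu Hmv.
  destruct (metric_derivatives u v Huv) as [Hsu Hsv].
  destruct (partials_at U beta1 u v hsb1 Huv) as [_ [b1v [_ Hb1]]].
  destruct (partials_at U beta2 u v hsb2 Huv) as [b2u [_ [Hb2 _]]].
  pose proof (frame_field_integrability U n2 _ _ _ _ _ _ _ _ _ u v _ _ _ _ _ _ _ _ _ _
    hU hsn2 Huv hxn2 hyn2 Hsv (pdv_opp _ _ _ _ Hmv) (pdv_opp _ _ _ _ Hb1)
    (hyy u v Huv) (hyn1 u v Huv) Hsu (pdu_opp _ _ _ _ Hmu) (pdu_opp _ _ _ _ Hb2)
    (hxx u v Huv) (hxn1 u v Huv)) as Hn2.
  destruct (orthonormal_dot_table _ _ _ _ (hframe u v Huv)) as (?&?&?&?&?&?&?&?&?&?&?&?&?&?&?&?).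
  pose proof (f_equal (dot (x u v)) Hn2) as Hx. expand_dots Hx.
  pose proof (f_equal (dot (y u v)) Hn2) as Hy. expand_dots Hy.
  assert (Hs : 0 < sqrt (E u v)) by exact (sqrt_lt_R0 _ (hEpos u v Huv)).
  split; apply Rmult_eq_reg_l with (sqrt (E u v)); lra.
Qed.

(* Gauss equation, from the y-component of the integrability of x. *)
Lemma gauss_equation u v g1v g2u : U u v -> pdv gamma1 u v g1v -> pdu gamma2 u v g2u ->
  g1v + g2u = sqrt (E u v) *
    (gamma1 u v ^ 2 + gamma2 u v ^ 2 - mu u v ^ 2 - nu u v ^ 2).
Proof.
  intros Huv Hg1 Hg2.
  destruct (metric_derivatives u v Huv) as [Hsu Hsv].
  destruct (partials_at U nu u v hsnu Huv) as [_ [nu_v [_ Hnv]]].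
  destruct (partials_at U mu u v hsmu Huv) as [mu_u [_ [Hmu _]]].
  pose proof (frame_field_integrability U x _ _ _ _ _ _ _ _ _ u v _ _ _ _ _ _ _ _ _ _
    hU hsx Huv hxx hyx Hsv Hg1 Hnv (hyy u v Huv) (hyn1 u v Huv)
    Hsu (pdu_opp _ _ _ _ Hg2) Hmu (hxy u v Huv) (hxn2 u v Huv)) as Hxi.
  destruct (orthonormal_dot_table _ _ _ _ (hframe u v Huv)) as (?&?&?&?&?&?&?&?&?&?&?&?&?&?&?&?).
  pose proof (f_equal (dot (y u v)) Hxi) as Hy. expand_dots Hy.
  assert (Hs : 0 < sqrt (E u v)) by exact (sqrt_lt_R0 _ (hEpos u v Huv)).
  apply Rmult_eq_reg_l with (sqrt (E u v)); lra.
Qed.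

Lemma codazzi_equations u v mu_u mu_v nu_u nu_v : U u v ->
  pdu mu u v mu_u -> pdv mu u v mu_v -> pdu nu u v nu_u -> pdv nu u v nu_v ->
  sqrt (E u v) * beta1 u v * (mu u v ^ 2 - nu u v ^ 2) = - (mu u v * nu_v - nu u v * mu_v) /\
  sqrt (E u v) * beta2 u v * (mu u v ^ 2 - nu u v ^ 2) = mu u v * nu_u - nu u v * mu_u.
Proof.
  intros Huv Hmu Hmv Hnu Hnv.
  destruct (partials_at U beta1 u v hsb1 Huv) as [_ [b1v [_ Hb1]]].
  destruct (partials_at U beta2 u v hsb2 Huv) as [b2u [_ [Hb2 _]]].
  destruct (n1_integrability u v nu_u nu_v b1v b2u Huv Hnu Hnv Hb1 Hb2) as [H1x [H1y _]].
  destruct (n2_integrability u v mu_u mu_v Huv Hmu Hmv) as [H2x H2y].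
  split; nra.
Qed.

Lemma ricci_equation u v b1v b2u : U u v -> pdv beta1 u v b1v -> pdu beta2 u v b2u ->
  b1v - b2u = sqrt (E u v) *
    (gamma1 u v * beta1 u v - gamma2 u v * beta2 u v + 2 * nu u v * mu u v).
Proof.
  intros Huv Hb1 Hb2.
  destruct (partials_at U nu u v hsnu Huv) as [nu_u [nu_v [Hnu Hnv]]].
  exact (proj2 (proj2 (n1_integrability u v nu_u nu_v b1v b2u Huv Hnu Hnv Hb1 Hb2))).
Qed.

Hypothesis hmunu : forall u v, U u v -> mu u v ^ 2 <> nu u v ^ 2.
Hypothesis hE : forall u v, U u v -> E u v = Rpower (Rabs (mu u v ^ 2 - nu u v ^ 2)) (- (1/2)).

Local Notation amp u v := (Rpower (Rabs (mu u v ^ 2 - nu u v ^ 2)) (1/4)).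
Local Notation ratio u v := ((mu u v + nu u v) / (mu u v - nu u v)).

Lemma amplitude_inv_sqrtE u v : U u v -> amp u v = / sqrt (E u v).
Proof.
  intros Huv. rewrite (hE u v Huv), sqrt_Rpower_inv_half, Rinv_inv; [reflexivity|].
  apply Rabs_pos_lt, (proj1 (sqr_diff_nonzero _ _ (hmunu u v Huv))).
Qed.

Lemma amplitude_derivatives u v : U u v ->
  pdu (fun s t => amp s t) u v (gamma2 u v) /\ pdv (fun s t => amp s t) u v (gamma1 u v).
Proof.
  intros Huv.
  assert (Hamp : forall s t, U s t -> / sqrt (E s t) = amp s t)
    by (intros s t Hst; symmetry; apply amplitude_inv_sqrtE, Hst).
  assert (Hs : 0 < sqrt (E u v)) by exact (sqrt_lt_R0 _ (hEpos u v Huv)).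
  destruct (metric_derivatives u v Huv) as [Hsu Hsv].
  split.
  - apply (pdu_ext U _ _ u v _ hU Huv Hamp).
    eapply Dv_eq; [apply (Dv_inv (fun s => sqrt (E s v))); [exact Hsu | lra] |].
    field; lra.
  - apply (pdv_ext U _ _ u v _ hU Huv Hamp).
    eapply Dv_eq; [apply (Dv_inv (fun t => sqrt (E u t))); [exact Hsv | lra] |].
    field; lra.
Qed.

Lemma log_ratio_derivatives u v : U u v ->
  pdu (fun s t => ln (sqrt (Rabs (ratio s t)))) u v (beta2 u v / amp u v) /\
  pdv (fun s t => ln (sqrt (Rabs (ratio s t)))) u v (- beta1 u v / amp u v).
Proof.
  intros Huv.
  destruct (sqr_diff_nonzero _ _ (hmunu u v Huv)) as (Hd & Hm & Hp & Hr).
  destruct (partials_at U mu u v hsmu Huv) as [mu_u [mu_v [Hmu Hmv]]].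
  destruct (partials_at U nu u v hsnu Huv) as [nu_u [nu_v [Hnu Hnv]]].
  destruct (codazzi_equations u v mu_u mu_v nu_u nu_v Huv Hmu Hmv Hnu Hnv) as [C1 C2].
  assert (Hlog : forall s t, U s t -> /4 * ln (ratio s t ^ 2) = ln (sqrt (Rabs (ratio s t)))).
  { intros s t Hst. symmetry. apply ln_sqrt_abs_quarter_ln_sqr.
    apply (sqr_diff_nonzero _ _ (hmunu s t Hst)). }
  assert (Hs : 0 < sqrt (E u v)) by exact (sqrt_lt_R0 _ (hEpos u v Huv)).
  rewrite amplitude_inv_sqrtE by exact Huv.
  split.
  - apply (pdu_ext U _ _ u v _ hU Huv Hlog).
    eapply Dv_eq.
    + apply Dv_scal, (Dv_ln_sqr (fun s => ratio s v)); [|exact Hr].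
      apply (Dv_div (fun s => mu s v + nu s v) (fun s => mu s v - nu s v)); [| |exact Hm].
      * exact (Dv_plus (fun s => mu s v) (fun s => nu s v) u _ _ Hmu Hnu).
      * exact (Dv_minus (fun s => mu s v) (fun s => nu s v) u _ _ Hmu Hnu).
    + replace (beta2 u v / / sqrt (E u v))
        with ((mu u v * nu_u - nu u v * mu_u) / (mu u v ^ 2 - nu u v ^ 2))
        by (rewrite <- C2; field; lra).
      field; repeat split; assumption.
  - apply (pdv_ext U _ _ u v _ hU Huv Hlog).
    eapply Dv_eq.
    + apply Dv_scal, (Dv_ln_sqr (fun t => ratio u t)); [|exact Hr].
      apply (Dv_div (fun t => mu u t + nu u t) (fun t => mu u t - nu u t)); [| |exact Hm].
      * exact (Dv_plus (fun t => mu u t) (fun t => nu u t) v _ _ Hmv Hnv).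
      * exact (Dv_minus (fun t => mu u t) (fun t => nu u t) v _ _ Hmv Hnv).
    + replace (- beta1 u v / / sqrt (E u v))
        with ((mu u v * nu_v - nu u v * mu_v) / (mu u v ^ 2 - nu u v ^ 2))
        by (rewrite <- (Ropp_involutive (mu u v * nu_v - nu u v * mu_v)), <- C1; field; lra).
      field; repeat split; assumption.
Qed.

(* The Gauss equation as an equation for |mu^2 - nu^2|:  ln |mu^2 - nu^2| is
   four times the logarithm of the amplitude, whose gradient is (gamma2, gamma1). *)
Lemma gauss_equation_canonical :
  exists L, is_laplacian U (fun u v => ln (Rabs (mu u v ^ 2 - nu u v ^ 2))) L /\
    forall u v, U u v ->
      1/4 * sqrt (Rabs (mu u v ^ 2 - nu u v ^ 2)) * L u v + nu u v ^ 2 + mu u v ^ 2 = 0.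
Proof.
  destruct (smooth_partials U gamma1 hsg1) as [G1u [G1v HG1]].
  destruct (smooth_partials U gamma2 hsg2) as [G2u [G2v HG2]].
  assert (Hlog : forall s t, U s t -> 4 * ln (amp s t) = ln (Rabs (mu s t ^ 2 - nu s t ^ 2)))
    by (intros s t _; rewrite ln_Rpower; field).
  eexists. split.
  - apply (laplacian_of_gradient U _ (fun s t => amp s t) gamma2 gamma1 gamma2 gamma1 G2u G1v 4 4).
    intros u v Huv.
    destruct (amplitude_derivatives u v Huv) as [Hau Hav].
    assert (Hpos : 0 < amp u v) by apply Rpower_pos.
    repeat split; [lra | exact Hau | exact Hav | apply HG2, Huv | apply HG1, Huv | |].
    + apply (pdu_ext U _ _ u v _ hU Huv Hlog), Dv_scal, (Dv_ln (fun s => amp s v)); assumption.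
    + apply (pdv_ext U _ _ u v _ hU Huv Hlog), Dv_scal, (Dv_ln (fun t => amp u t)); assumption.
  - intros u v Huv. cbv beta.
    assert (Hd : 0 < Rabs (mu u v ^ 2 - nu u v ^ 2))
      by apply Rabs_pos_lt, (sqr_diff_nonzero _ _ (hmunu u v Huv)).
    pose proof (gauss_equation u v _ _ Huv (proj2 (HG1 u v Huv)) (proj1 (HG2 u v Huv))) as Hg.
    assert (Hs : 0 < sqrt (E u v)) by exact (sqrt_lt_R0 _ (hEpos u v Huv)).
    rewrite (sqrt_eq_Rpower_quarter_sqr _ Hd), (amplitude_inv_sqrtE u v Huv).
    assert (Hnm : nu u v ^ 2 + mu u v ^ 2
      = gamma1 u v ^ 2 + gamma2 u v ^ 2 - (G1v u v + G2u u v) / sqrt (E u v))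
      by (rewrite Hg; field; lra).
    rewrite Rplus_assoc, Hnm. field; lra.
Qed.

(* The Ricci equation as an equation for (mu + nu) / (mu - nu):  ln of its
   modulus has gradient 2 (beta2, -beta1) / amplitude. *)
Lemma ricci_equation_canonical :
  exists L, is_laplacian U (fun u v => ln (Rabs ((mu u v + nu u v) / (mu u v - nu u v)))) L /\
    forall u v, U u v ->
      1/2 * sqrt (Rabs (mu u v ^ 2 - nu u v ^ 2)) * L u v + 2 * nu u v * mu u v = 0.
Proof.
  destruct (smooth_partials U beta1 hsb1) as [B1u [B1v HB1]].
  destruct (smooth_partials U beta2 hsb2) as [B2u [B2v HB2]].
  assert (Hlog : forall s t, U s t ->
    2 * ln (sqrt (Rabs (ratio s t))) = ln (Rabs (ratio s t))).
  { intros s t Hst. destruct (sqr_diff_nonzero _ _ (hmunu s t Hst)) as (_ & _ & _ & Hr).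
    rewrite ln_sqrt_abs_quarter_ln_sqr, ln_abs_half_ln_sqr by exact Hr. field. }
  eexists. split.
  - apply (laplacian_of_gradient U _ (fun s t => amp s t) beta2 beta1 gamma2 gamma1 B2u B1v 2 (-2)).
    intros u v Huv.
    destruct (amplitude_derivatives u v Huv) as [Hau Hav].
    destruct (log_ratio_derivatives u v Huv) as [Hhu Hhv].
    assert (Hpos : 0 < amp u v) by apply Rpower_pos.
    repeat split; [lra | exact Hau | exact Hav | apply HB2, Huv | apply HB1, Huv | |].
    + apply (pdu_ext U _ _ u v _ hU Huv Hlog), Dv_scal, Hhu.
    + apply (pdv_ext U _ _ u v _ hU Huv Hlog).
      eapply Dv_eq; [apply Dv_scal, Hhv | unfold Rdiv; ring].
  - intros u v Huv. cbv beta.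
    assert (Hd : 0 < Rabs (mu u v ^ 2 - nu u v ^ 2))
      by apply Rabs_pos_lt, (sqr_diff_nonzero _ _ (hmunu u v Huv)).
    pose proof (ricci_equation u v _ _ Huv (proj2 (HB1 u v Huv)) (proj1 (HB2 u v Huv))) as Hr.
    assert (Hs : 0 < sqrt (E u v)) by exact (sqrt_lt_R0 _ (hEpos u v Huv)).
    rewrite (sqrt_eq_Rpower_quarter_sqr _ Hd), (amplitude_inv_sqrtE u v Huv).
    replace (2 * nu u v * mu u v)
      with ((B1v u v - B2u u v) / sqrt (E u v) - gamma1 u v * beta1 u v + gamma2 u v * beta2 u v)
      by (rewrite Hr; field; lra).
    field; lra.
Qed.

Lemma invariants_as_derivatives u v : U u v ->
  pdv (fun s t => amp s t) u v (gamma1 u v) /\ pdu (fun s t => amp s t) u v (gamma2 u v) /\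
  (exists d, pdv (fun s t => ln (sqrt (Rabs (ratio s t)))) u v d /\ beta1 u v = - amp u v * d) /\
  (exists d, pdu (fun s t => ln (sqrt (Rabs (ratio s t)))) u v d /\ beta2 u v = amp u v * d).
Proof.
  intros Huv.
  destruct (amplitude_derivatives u v Huv) as [Hau Hav].
  destruct (log_ratio_derivatives u v Huv) as [Hhu Hhv].
  assert (Hpos : 0 < amp u v) by apply Rpower_pos.
  split; [exact Hav|]. split; [exact Hau|].
  split; eexists; (split; [eassumption | field; lra]).
Qed.

End StructureEquations.

(* Reformulation in terms of K = -(mu^2 + nu^2) and kappa = 2 nu mu:
   K^2 - kappa^2 = (mu^2 - nu^2)^2 and (K - kappa)/(K + kappa) = ((mu+nu)/(mu-nu))^2. *)
Lemma curvature_discriminant a b :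
  (- (a ^ 2 + b ^ 2)) ^ 2 - (2 * b * a) ^ 2 = Rabs (a ^ 2 - b ^ 2) ^ 2.
Proof. rewrite pow2_abs. ring. Qed.

Lemma curvature_ratio a b : a ^ 2 <> b ^ 2 ->
  (- (a ^ 2 + b ^ 2) - 2 * b * a) / (- (a ^ 2 + b ^ 2) + 2 * b * a) = ((a + b) / (a - b)) ^ 2.
Proof.
  intros Hab. destruct (sqr_diff_nonzero a b Hab) as (_ & Hm & _ & _).
  field. split; [exact Hm|]. intro H. apply Hm. nra.
Qed.

Lemma gauss_equation_curvatures U mu nu L : open2 U ->
  (forall u v, U u v -> mu u v ^ 2 <> nu u v ^ 2) ->
  is_laplacian U (fun u v => ln (Rabs (mu u v ^ 2 - nu u v ^ 2))) L ->
  (forall u v, U u v ->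
     1/4 * sqrt (Rabs (mu u v ^ 2 - nu u v ^ 2)) * L u v + nu u v ^ 2 + mu u v ^ 2 = 0) ->
  exists L', is_laplacian U
      (fun u v => ln ((- (mu u v ^ 2 + nu u v ^ 2)) ^ 2 - (2 * nu u v * mu u v) ^ 2)) L' /\
    forall u v, U u v ->
      1/8 * Rpower ((- (mu u v ^ 2 + nu u v ^ 2)) ^ 2 - (2 * nu u v * mu u v) ^ 2) (1/4) * L' u v
      - - (mu u v ^ 2 + nu u v ^ 2) = 0.
Proof.
  intros hU hmn HL Heq. exists (fun u v => 2 * L u v). split.
  - apply (laplacian_ext U (fun u v => 2 * ln (Rabs (mu u v ^ 2 - nu u v ^ 2))));
      [exact hU | | exact (laplacian_scale U _ L 2 HL)].
    intros u v Huv. rewrite curvature_discriminant, ln_pow; [simpl; ring|].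
    apply Rabs_pos_lt, (sqr_diff_nonzero _ _ (hmn u v Huv)).
  - intros u v Huv. specialize (Heq u v Huv).
    rewrite curvature_discriminant, Rpower_sqr_quarter; [lra|].
    apply Rabs_pos_lt, (sqr_diff_nonzero _ _ (hmn u v Huv)).
Qed.

Lemma ricci_equation_curvatures U mu nu L : open2 U ->
  (forall u v, U u v -> mu u v ^ 2 <> nu u v ^ 2) ->
  is_laplacian U (fun u v => ln (Rabs ((mu u v + nu u v) / (mu u v - nu u v)))) L ->
  (forall u v, U u v ->
     1/2 * sqrt (Rabs (mu u v ^ 2 - nu u v ^ 2)) * L u v + 2 * nu u v * mu u v = 0) ->
  exists L', is_laplacian U
      (fun u v => ln ((- (mu u v ^ 2 + nu u v ^ 2) - 2 * nu u v * mu u v) /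
                      (- (mu u v ^ 2 + nu u v ^ 2) + 2 * nu u v * mu u v))) L' /\
    forall u v, U u v ->
      1/4 * Rpower ((- (mu u v ^ 2 + nu u v ^ 2)) ^ 2 - (2 * nu u v * mu u v) ^ 2) (1/4) * L' u v
      + 2 * nu u v * mu u v = 0.
Proof.
  intros hU hmn HL Heq. exists (fun u v => 2 * L u v). split.
  - apply (laplacian_ext U (fun u v => 2 * ln (Rabs ((mu u v + nu u v) / (mu u v - nu u v)))));
      [exact hU | | exact (laplacian_scale U _ L 2 HL)].
    intros u v Huv. rewrite (curvature_ratio _ _ (hmn u v Huv)), ln_abs_half_ln_sqr; [field|].
    apply (sqr_diff_nonzero _ _ (hmn u v Huv)).
  - intros u v Huv. specialize (Heq u v Huv).
    rewrite curvature_discriminant, Rpower_sqr_quarter; [lra|].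
    apply Rabs_pos_lt, (sqr_diff_nonzero _ _ (hmn u v Huv)).
Qed.

Theorem mainTheorem9
  (U : R -> R -> Prop) (z x y n1 n2 : R -> R -> V4)
  (E nu mu gamma1 gamma2 beta1 beta2 : R -> R -> R)
  (hU : open2 U)
  (hsz : smoothV U z) (hsx : smoothV U x) (hsy : smoothV U y)
  (hsn1 : smoothV U n1) (hsn2 : smoothV U n2)
  (hsE : smooth2 U E) (hsnu : smooth2 U nu) (hsmu : smooth2 U mu)
  (hsg1 : smooth2 U gamma1) (hsg2 : smooth2 U gamma2)
  (hsb1 : smooth2 U beta1) (hsb2 : smooth2 U beta2)
  (* geometric frame: positively oriented orthonormal *)
  (hframe : forall u v, U u v -> pos_orthonormal (x u v) (y u v) (n1 u v) (n2 u v))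
  (* invariant conditions *)
  (hmu : forall u v, U u v -> mu u v > 0)
  (hnu : forall u v, U u v -> nu u v <> 0)
  (hmunu : forall u v, U u v -> mu u v ^ 2 <> nu u v ^ 2)
  (* strongly regular *)
  (hreg : forall u v, U u v -> gamma1 u v * gamma2 u v <> 0)
  (* canonical parameters: E = G = |mu^2 - nu^2|^(-1/2), F = 0,
     x = z_u / sqrt E, y = z_v / sqrt G *)
  (hE : forall u v, U u v -> E u v = Rpower (Rabs (mu u v ^ 2 - nu u v ^ 2)) (- (1/2)))
  (hzu : forall u v, U u v -> pduV z u v (vscale (sqrt (E u v)) (x u v)))
  (hzv : forall u v, U u v -> pdvV z u v (vscale (sqrt (E u v)) (y u v)))
  (* derivative formulas of the geometric frame; nabla'_x = (1/sqrt E) d/du,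
     nabla'_y = (1/sqrt G) d/dv with G = E *)
  (hxx : forall u v, U u v -> pduV x u v
     (vscale (sqrt (E u v)) (vadd (vscale (gamma1 u v) (y u v)) (vscale (nu u v) (n1 u v)))))
  (hxy : forall u v, U u v -> pduV y u v
     (vscale (sqrt (E u v)) (vadd (vscale (- gamma1 u v) (x u v)) (vscale (mu u v) (n2 u v)))))
  (hyx : forall u v, U u v -> pdvV x u v
     (vscale (sqrt (E u v)) (vadd (vscale (- gamma2 u v) (y u v)) (vscale (mu u v) (n2 u v)))))
  (hyy : forall u v, U u v -> pdvV y u v
     (vscale (sqrt (E u v)) (vadd (vscale (gamma2 u v) (x u v)) (vscale (- nu u v) (n1 u v)))))
  (hxn1 : forall u v, U u v -> pduV n1 u v
     (vscale (sqrt (E u v)) (vadd (vscale (- nu u v) (x u v)) (vscale (beta1 u v) (n2 u v)))))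
  (hyn1 : forall u v, U u v -> pdvV n1 u v
     (vscale (sqrt (E u v)) (vadd (vscale (nu u v) (y u v)) (vscale (beta2 u v) (n2 u v)))))
  (hxn2 : forall u v, U u v -> pduV n2 u v
     (vscale (sqrt (E u v)) (vadd (vscale (- mu u v) (y u v)) (vscale (- beta1 u v) (n1 u v)))))
  (hyn2 : forall u v, U u v -> pdvV n2 u v
     (vscale (sqrt (E u v)) (vadd (vscale (- mu u v) (x u v)) (vscale (- beta2 u v) (n1 u v))))) :
  let f := fun u v => Rpower (Rabs (mu u v ^ 2 - nu u v ^ 2)) (1/4) in
  let h := fun u v => ln (sqrt (Rabs ((mu u v + nu u v) / (mu u v - nu u v)))) in
  let K := fun u v => - (mu u v ^ 2 + nu u v ^ 2) in
  let kappa := fun u v => 2 * nu u v * mu u v in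
  (forall u v, U u v ->
     pdv f u v (gamma1 u v) /\ pdu f u v (gamma2 u v) /\
     (exists d, pdv h u v d /\ beta1 u v = - f u v * d) /\
     (exists d, pdu h u v d /\ beta2 u v = f u v * d)) /\
  (exists L1, is_laplacian U (fun u v => ln (Rabs (mu u v ^ 2 - nu u v ^ 2))) L1 /\
     forall u v, U u v ->
       1/4 * sqrt (Rabs (mu u v ^ 2 - nu u v ^ 2)) * L1 u v + nu u v ^ 2 + mu u v ^ 2 = 0) /\
  (exists L2, is_laplacian U (fun u v => ln (Rabs ((mu u v + nu u v) / (mu u v - nu u v)))) L2 /\
     forall u v, U u v ->
       1/2 * sqrt (Rabs (mu u v ^ 2 - nu u v ^ 2)) * L2 u v + 2 * nu u v * mu u v = 0) /\
  (exists L3, is_laplacian U (fun u v => ln (K u v ^ 2 - kappa u v ^ 2)) L3 /\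
     forall u v, U u v ->
       1/8 * Rpower (K u v ^ 2 - kappa u v ^ 2) (1/4) * L3 u v - K u v = 0) /\
  (exists L4, is_laplacian U (fun u v => ln ((K u v - kappa u v) / (K u v + kappa u v))) L4 /\
     forall u v, U u v ->
       1/4 * Rpower (K u v ^ 2 - kappa u v ^ 2) (1/4) * L4 u v + kappa u v = 0).
Proof.
  intros f h K kappa.
  assert (hEpos : forall u v, U u v -> 0 < E u v)
    by (intros u v Huv; rewrite (hE u v Huv); apply Rpower_pos).
  destruct (gauss_equation_canonical U z x y n1 n2 E nu mu gamma1 gamma2 beta1 beta2)
    as [L1 [HL1 EL1]]; try assumption.
  destruct (ricci_equation_canonical U z x y n1 n2 E nu mu gamma1 gamma2 beta1 beta2)
    as [L2 [HL2 EL2]]; try assumption.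
  split; [apply (invariants_as_derivatives U z x y n1 n2 E nu mu gamma1 gamma2 beta1 beta2);
          assumption |].
  split; [exists L1; split; assumption |].
  split; [exists L2; split; assumption |].
  split.
  - exact (gauss_equation_curvatures U mu nu L1 hU hmunu HL1 EL1).
  - exact (ricci_equation_curvatures U mu nu L2 hU hmunu HL2 EL2).
Qed.
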